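(* Let $\mathbf B$ be a partial residuated Boolean algebra and let $a,b\in B$ with $a\not\leq b$. Then there exists a prime filter $F$ of $\mathbf B$ such that $a\in F$ and $b\notin F$.
   Context: A residuated Boolean algebra is a Boolean algebra $(A,\vee,\wedge,\neg,\top,\bot,\leq)$ with a binary operation $\otimes$ having unit $1$ and operations $\backslash,/$ with $a\otimes b\leq c$ iff $b\leq a\backslash c$ iff $a\leq c/b$. A partial structure $\mathbf B=(B,\otimes,\backslash,/,\vee,\wedge,\neg,1,\top,\bot,\leq)$ has partial operations on $B$ (write $x\star y=\infty$ if undefined), constants in $B$ and a relation $\leq$. An embedding into a total residuated Boolean algebra is an injection preserving constants, commuting with operations wherever defined, and satisfying $x\leq y\iff\iota(x)\leq\iota(y)$. $\mathbf B$ is a partial residuated Boolean algebra if it embeds into some residuated Boolean algebra and for every $a\in B$, $\neg a$ is defined, $a\vee\neg a=\top$ and $a\wedge\neg a=\bot$. A prime filter of $\mathbf B$ is $F\subseteq B$, $F\neq B$, such that: $a\in F$, $a\leq b$ imply $b\in F$; $a,b\in F$ and $a\wedge b\neq\infty$ imply $a\wedge b\in F$; and $\neg a\in F$ iff $a\notin F$ for all $a\in B$. *)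

(* Boolean algebras are MathComp's complemented distributive
   lattices with top and bottom (ctbDistrLatticeType). *)
From HB Require Import structures.
From mathcomp Require Import all_boot all_order.
Set Warnings "-notation-overridden".
Import Order.Theory.
Set Implicit Arguments. Unset Strict Implicit. Unset Printing Implicit Defensive.
Local Open Scope order_scope.

Record rba_ops (d : Order.disp_t) (T : ctbDistrLatticeType d) := RbaOps {
  otimes : T -> T -> T;
  ldiv : T -> T -> T;   (* a \ c *)
  rdiv : T -> T -> T;   (* c / b *)
  one : T
}.

Definition is_rba (d : Order.disp_t) (T : ctbDistrLatticeType d) (o : rba_ops T) : Prop :=
  (forall x : T, otimes o (one o) x = x /\ otimes o x (one o) = x) /\
  (forall a b c : T,
     (otimes o a b <= c <-> b <= ldiv o a c) /\
     (b <= ldiv o a c <-> a <= rdiv o c b)).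

(** Partial structures (B, ⊗, \, /, ∨, ∧, ¬, 1, ⊤, ⊥, ≤):
    partial operations are option-valued ([None] = undefined = ∞). *)
Record pstruct := PStruct {
  pcar : Type;
  potimes : pcar -> pcar -> option pcar;
  pldiv : pcar -> pcar -> option pcar;
  prdiv : pcar -> pcar -> option pcar;
  pjoin : pcar -> pcar -> option pcar;
  pmeet : pcar -> pcar -> option pcar;
  pneg : pcar -> option pcar;
  pone : pcar;
  ptop : pcar;
  pbot : pcar;
  ple : pcar -> pcar -> Prop
}.
Arguments potimes : clear implicits.
Arguments pldiv : clear implicits.
Arguments prdiv : clear implicits.
Arguments pjoin : clear implicits.
Arguments pmeet : clear implicits.
Arguments pneg : clear implicits.
Arguments pone : clear implicits.
Arguments ptop : clear implicits.
Arguments pbot : clear implicits.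
Arguments ple : clear implicits.

Definition embedding (B : pstruct) (d : Order.disp_t) (T : ctbDistrLatticeType d)
    (o : rba_ops T) (i : pcar B -> T) : Prop :=
  injective i /\
  i (pone B) = one o /\ i (ptop B) = \top /\ i (pbot B) = \bot /\
  (forall x y z, potimes B x y = Some z -> i z = otimes o (i x) (i y)) /\
  (forall x y z, pldiv B x y = Some z -> i z = ldiv o (i x) (i y)) /\
  (forall x y z, prdiv B x y = Some z -> i z = rdiv o (i x) (i y)) /\
  (forall x y z, pjoin B x y = Some z -> i z = i x `|` i y) /\
  (forall x y z, pmeet B x y = Some z -> i z = i x `&` i y) /\
  (forall x z, pneg B x = Some z -> i z = ~` i x) /\
  (forall x y, ple B x y <-> i x <= i y).

Definition partial_rba (B : pstruct) : Prop :=
  (exists (d : Order.disp_t) (T : ctbDistrLatticeType d) (o : rba_ops T)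
          (i : pcar B -> T), is_rba o /\ embedding o i) /\
  (forall a : pcar B, exists na,
     pneg B a = Some na /\ pjoin B a na = Some (ptop B) /\
     pmeet B a na = Some (pbot B)).

Definition prime_filter (B : pstruct) (F : pcar B -> Prop) : Prop :=
  (exists x, ~ F x) /\
  (forall a b, F a -> ple B a b -> F b) /\
  (forall a b c, F a -> F b -> pmeet B a b = Some c -> F c) /\
  (forall a na, pneg B a = Some na -> (F na <-> ~ F a)).
Arguments prime_filter : clear implicits.

(** Embed the partial algebra into a total Boolean algebra [T] and separate
    the images of [a] and [b] there: since [i a `&` ~` i b] is not [\bot], Zorn's
    lemma gives a maximal proper filter of [T] containing it, and a maximal
    proper filter contains exactly one of [x] and [~` x] for every [x].  Its
    preimage under the embedding is a prime filter of the partial algebra,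
    because the embedding reflects the order and preserves the defined meets
    and negations. *)
From mathcomp Require Import all_boot all_order.
From mathcomp Require Import boolp classical_sets.
Set Implicit Arguments.
Unset Strict Implicit.
Unset Printing Implicit Defensive.
Import Order.Theory.
Local Open Scope classical_set_scope.
Local Open Scope order_scope.

Section BooleanFilters.
Variables (d : Order.disp_t) (T : ctbDistrLatticeType d).
Implicit Types (x y c : T) (F G M U : set T).

Definition proper_filter F : Prop :=
  [/\ forall x y, F x -> x <= y -> F y,
      forall x y, F x -> F y -> F (x `&` y) & ~ F \bot].

Definition maximal_filter M : Prop :=
  proper_filter M /\ forall G, proper_filter G -> M `<=` G -> G `<=` M.

Definition ultrafilter U : Prop :=
  proper_filter U /\ forall x, U x \/ U (~` x).

Definition upset c : set T := [set x | c <= x].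

Lemma proper_filter_upset c : c != \bot -> proper_filter (upset c).
Proof.
move=> c0; split=> [x y /le_trans h /h | x y cx cy | ] //=.
- by rewrite /upset /= lexI cx cy.
- by rewrite /upset /= lex0; apply/negP.
Qed.

Lemma proper_filter_bigcup (C : set (set T)) :
  C `<=` proper_filter -> total_on C subset ->
  proper_filter (\bigcup_(F in C) F).
Proof.
move=> Cfil Ctot; split.
- move=> x y [F CF Fx] xy; exists F => //.
  by have [up _ _] := Cfil F CF; apply: up xy.
- move=> x y [F CF Fx] [G CG Gy].
  have [FG|GF] := Ctot F G CF CG.
  + by exists G => //; have [_ meet _] := Cfil G CG; apply: meet (FG x Fx) Gy.
  + by exists F => //; have [_ meet _] := Cfil F CF; apply: meet Fx (GF y Gy).
- by move=> [F CF F0]; have [_ _ []] := Cfil F CF.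
Qed.

(* The union over the possibly empty chain [C] is that of the nonempty chain
   [upset c |` [set X `|` upset c | X in C]]. *)
Lemma proper_filter_bigcupU c (C : set (set T)) : c != \bot ->
  (forall X, C X -> proper_filter (X `|` upset c)%classic) ->
  total_on C subset -> proper_filter (\bigcup_(X in C) X `|` upset c)%classic.
Proof.
move=> c0 CU Ctot; pose C' := upset c |` [set (X `|` upset c)%classic | X in C].
have -> : (\bigcup_(X in C) X `|` upset c)%classic = \bigcup_(Y in C') Y.
  apply/seteqP; split=> x.
  - case=> [[X CX Xx]|cx]; last by exists (upset c) => //; left.
    by exists (X `|` upset c)%classic; [right; exists X|left].
  - case=> Y [->|[X CX <-]] Yx; first by right.
    by case: Yx => [Xx|cx]; [left; exists X|right].
apply: proper_filter_bigcup.
  by move=> Y [->|[X CX <-]]; [exact: proper_filter_upset|exact: CU].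
move=> _ _ [->|[X CX <-]] [->|[Y CY <-]].
- by left.
- by left; apply: subsetUr.
- by right; apply: subsetUr.
- by have [XY|YX] := Ctot X Y CX CY; [left|right]; apply: setSU.
Qed.

Lemma exists_maximal_filter c : c != \bot ->
  exists M, maximal_filter M /\ M c.
Proof.
move=> c0; pose P := [set A | proper_filter (A `|` upset c)%classic].
have [A [PA Amax]] : exists A, P A /\ forall A', A `<` A' -> ~ P A'.
  by apply: Zorn_bigcup => C CP; apply: proper_filter_bigcupU.
exists (A `|` upset c)%classic; split; last by apply: subsetUr; exact: lexx.
split=> // G Gfil AG x Gx; apply: contrapT => notAx.
have [upG _ _] := Gfil.
have AG_proper : A `<` G.
  split=> [y Ay|GA]; first by apply: AG; left.
  by apply: notAx; left; apply: GA.
apply: (Amax G AG_proper); rewrite /P /= (setUidPl _ _).2 // => y cy.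
by apply: upG cy; apply: AG; right; exact: lexx.
Qed.

Lemma proper_filter_adjoin M x : proper_filter M -> ~ M (~` x) ->
  proper_filter [set y | exists2 m, M m & m `&` x <= y].
Proof.
move=> [Mup Mmeet Mbot] Mnx; split.
- by move=> y z [m Mm mxy] yz; exists m => //; apply: le_trans yz.
- move=> y z [m Mm mxy] [n Mn nxz]; exists (m `&` n); first exact: Mmeet.
  by rewrite lexI (le_trans _ mxy) ?(le_trans _ nxz) // leI2 ?leIl ?leIr.
- by case=> m Mm; rewrite lex0 disj_leC => /(Mup _ _ Mm).
Qed.

Lemma maximal_filter_ultra M : maximal_filter M -> M !=set0 -> ultrafilter M.
Proof.
move=> [Mfil Mmax] [c Mc]; split=> // x.
have [|Mnx] := pselect (M (~` x)); first by right.
have MG : M `<=` [set y | exists2 m, M m & m `&` x <= y].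
  by move=> y My; exists y => //; apply: leIl.
by left; apply: (Mmax _ (proper_filter_adjoin Mfil Mnx) MG); exists c => //; apply: leIr.
Qed.

Lemma ultrafilter_compl U x : ultrafilter U -> U (~` x) <-> ~ U x.
Proof.
move=> [[_ Umeet Ubot] Uult]; split=> [Unx Ux|nUx]; last by case: (Uult x).
by apply: Ubot; rewrite -(meetxC x); apply: Umeet.
Qed.

Lemma ultrafilter_separation a b : ~~ (a <= b) ->
  exists U, [/\ ultrafilter U, U a & ~ U b].
Proof.
move=> nab; have c0 : a `&` ~` b != \bot by rewrite disj_leC complK.
have [M [Mmax Mc]] := exists_maximal_filter c0.
have Mult := maximal_filter_ultra Mmax (ex_intro _ _ Mc).
have [[Mup _ _] _] := Mult.
exists M; split=> //; first by apply: Mup Mc _; apply: leIl.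
by apply/(ultrafilter_compl b Mult); apply: Mup Mc _; apply: leIr.
Qed.
End BooleanFilters.

Lemma prime_filter_preimage (B : pstruct) (d : Order.disp_t)
    (T : ctbDistrLatticeType d) (i : pcar B -> T) (U : set T) (b : pcar B) :
  (forall x y, ple B x y -> i x <= i y) ->
  (forall x y z, pmeet B x y = Some z -> i z = i x `&` i y) ->
  (forall x z, pneg B x = Some z -> i z = ~` i x) ->
  ultrafilter U -> ~ U (i b) -> prime_filter B (U \o i).
Proof.
move=> ile imeet ineg Uult Ub; have [[Uup Umeet _] _] := Uult.
split; [by exists b | split; [|split]].
- by move=> x y Ux /ile; apply: Uup.
- by move=> x y z Ux Uy /imeet /= ->; apply: Umeet.
- by move=> x nx /ineg /= ->; apply: ultrafilter_compl.
Qed.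

Theorem lemma21 (B : pstruct) (HB : partial_rba B) (a b : pcar B)
  (hab : ~ ple B a b) :
  exists F : pcar B -> Prop, prime_filter B F /\ F a /\ ~ F b.
Proof.
have [[d [T [o [i [_ emb]]]]] _] := HB.
have [_ [_ [_ [_ [_ [_ [_ [_ [imeet [ineg ile]]]]]]]]]] := emb.
have nab : ~~ (i a <= i b) by apply/negP => /ile.
have [U [Uult Ua Ub]] := ultrafilter_separation nab.
exists (U \o i); split=> //.
by apply: (prime_filter_preimage _ imeet ineg Uult Ub) => x y /ile.
Qed.
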